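(* Let $\mathcal M$ be a local Moufang set with basis $(0,\infty)$ and let $x\in X$ be a unit. Then there is a unique element $\mu_x\in U_0\alpha_xU_0$ with $0\mu_x=\infty$ and $\infty\mu_x=0$. Moreover $\mu_x=g\alpha_xh$, where $g$ is the unique element of $U_0$ mapping $\infty$ to $-x$ and $h$ is the unique element of $U_0$ mapping $x$ to $\infty$; in particular $g,h\in U_0^\times:=\{u\in U_0\mid \overline u\neq \mathrm{id}\}$.
   Context: Group actions are right actions, written $xg$; conjugation is $g^h=h^{-1}gh$. For a set $X$ with an equivalence relation $\sim$, $\overline{x}$ denotes the class of $x$, $\overline X$ the set of classes, and $\mathrm{Sym}(X,\sim)$ the group of bijections $g$ of $X$ with $x\sim y\iff xg\sim yg$; each such $g$ induces a permutation $\overline g$ of $\overline X$, and for a subgroup $U\le \mathrm{Sym}(X,\sim)$, $\overline U$ is the induced group of permutations of $\overline X$. A local Moufang set consists of a set with equivalence relation $(X,\sim)$ with $|\overline X|>2$ and, for each $x\in X$, a subgroup (root group) $U_x\le\mathrm{Sym}(X,\sim)$ such that: (LM0) if $x\sim y$ then $\overline{U_x}=\overline{U_y}$; (LM1) $U_x$ fixes $x$ and acts sharply transitively on $X\setminus\overline x$; (LM1') $\overline{U_x}$ fixes $\overline x$ and acts sharply transitively on $\overline X\setminus\{\overline x\}$; (LM2) $U_x^g=U_{xg}$ for all $x\in X$ and all $g$ in the little projective group $G:=\langle U_x\mid x\in X\rangle$. A basis is a pair $(0,\infty)$ of points of $X$ with $0\not\sim\infty$ (fixed). For $x\not\sim\infty$,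 $\alpha_x$ denotes the unique element of $U_\infty$ with $0\alpha_x=x$, and $-x:=0\alpha_x^{-1}$. A unit is a point $x\in X$ with $x\not\sim 0$ and $x\not\sim\infty$. *)

(* Conventions: a permutation g of X is a function X -> X; the right action
   x g of the paper is the application  g x ; the product g h (first g, then h)
   is  rmul g h := fun z => h (g z). *)
From Stdlib Require Import Classical FunctionalExtensionality.

Section LMS.
Context {X : Type}.

Definition rmul (g h : X -> X) : X -> X := fun z => h (g z).

Definition is_inverse (g g' : X -> X) : Prop :=
  (forall z, g' (g z) = z) /\ (forall z, g (g' z) = z).

Definition in_Sym (eqv : X -> X -> Prop) (g : X -> X) : Prop :=
  (exists g', is_inverse g g') /\ (forall y z, eqv y z <-> eqv (g y) (g z)).

Definition is_subgroup (eqv : X -> X -> Prop) (S : (X -> X) -> Prop) : Prop :=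
  (forall g, S g -> in_Sym eqv g) /\
  S (fun z => z) /\
  (forall g h, S g -> S h -> S (rmul g h)) /\
  (forall g, S g -> exists g', S g' /\ is_inverse g g').

Definition more_than_two_classes (eqv : X -> X -> Prop) : Prop :=
  exists a b c, ~ eqv a b /\ ~ eqv a c /\ ~ eqv b c.

(* the little projective group G = < U_x | x in X > : all finite products of
   elements of root groups (root groups are subgroups, so this is the
   generated group) *)
Inductive little_proj (U : X -> (X -> X) -> Prop) : (X -> X) -> Prop :=
  | lp_id : little_proj U (fun z => z)
  | lp_root : forall x u, U x u -> little_proj U u
  | lp_mul : forall g h, little_proj U g -> little_proj U h ->
      little_proj U (rmul g h).

Definition is_local_moufang (eqv : X -> X -> Prop)
  (U : X -> (X -> X) -> Prop) : Prop :=
  (forall x, eqv x x) /\ (forall x y, eqv x y -> eqv y x) /\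
  (forall x y z, eqv x y -> eqv y z -> eqv x z) /\
  more_than_two_classes eqv /\
  (forall x, is_subgroup eqv (U x)) /\
  (* (LM0): x ~ y  ->  overline(U_x) = overline(U_y) *)
  (forall x y, eqv x y ->
     forall g, U x g -> exists h, U y h /\ forall z, eqv (g z) (h z)) /\
  (forall x g, U x g -> g x = x) /\
  (forall x y z, ~ eqv y x -> ~ eqv z x ->
     exists g, U x g /\ g y = z /\ forall g', U x g' -> g' y = z -> g' = g) /\
  (* (LM1'): overline(U_x) fixes overline x and acts sharply transitively on
     the classes different from overline x *)
  (forall x g, U x g -> eqv (g x) x) /\
  (forall x y z, ~ eqv y x -> ~ eqv z x -> exists g, U x g /\ eqv (g y) z) /\
  (forall x y g h, ~ eqv y x -> U x g -> U x h -> eqv (g y) (h y) ->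
     forall w, eqv (g w) (h w)) /\
  (* (LM2): U_x^g = U_{xg} for g in G, where U_x^g = { g^-1 v g | v in U_x };
     u = g^-1 v g  is expressed as  g u = v g *)
  (forall g, little_proj U g -> forall x u,
     U (g x) u <-> exists v, U x v /\ rmul g u = rmul v g).

Definition nontrivial_on_classes (eqv : X -> X -> Prop) (g : X -> X) : Prop :=
  exists z, ~ eqv (g z) z.

End LMS.

(* The basis points are swapped by [a alpha b] with [a, b] in [U_0] exactly
   when [a] sends [infty] to the preimage [mx] of [0] under [alpha] and [b]
   sends [x = 0 alpha] to [infty]: [a] and [b] fix [0], and [alpha], [b] are
   injective.  Sharp transitivity of [U_0] on the points not equivalent to [0]
   determines such [a] and [b] uniquely, and they move the classes of [infty]
   and [x] respectively, because [mx] and [x] are units. *)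

Section RootGroups.

Context {X : Type} {eqv : X -> X -> Prop} {U : X -> (X -> X) -> Prop}.
Hypothesis HM : is_local_moufang eqv U.

Lemma lms_eqv_sym (a b : X) : eqv a b -> eqv b a.
Proof. destruct HM as [_ [Hsym _]]. exact (Hsym a b). Qed.

Lemma root_fix (y : X) (g : X -> X) : U y g -> g y = y.
Proof. destruct HM as [_ [_ [_ [_ [_ [_ [Hfix _]]]]]]]. exact (Hfix y g). Qed.

Lemma root_injective (y : X) (g : X -> X) :
  U y g -> forall a b, g a = g b -> a = b.
Proof.
  intros Hg a b E.
  destruct HM as [_ [_ [_ [_ [Hsub _]]]]].
  destruct (proj1 (Hsub y) g Hg) as [[g' [Hg'g _]] _].
  rewrite <- (Hg'g a), <- (Hg'g b), E. reflexivity.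
Qed.

Lemma root_reflects_not_eqv (y : X) (g : X -> X) (a b : X) :
  U y g -> ~ eqv (g a) (g b) -> ~ eqv a b.
Proof.
  intros Hg Hn E. apply Hn.
  destruct HM as [_ [_ [_ [_ [Hsub _]]]]].
  destruct (proj1 (Hsub y) g Hg) as [_ Hcompat].
  exact (proj1 (Hcompat a b) E).
Qed.

Lemma root_unique_transport (y a b : X) :
  ~ eqv a y -> ~ eqv b y -> exists! g, U y g /\ g a = b.
Proof.
  intros Ha Hb.
  destruct HM as [_ [_ [_ [_ [_ [_ [_ [Hsharp _]]]]]]]].
  destruct (Hsharp y a b Ha Hb) as [g [Hg [Hga Huniq]]].
  exists g. split; [split; assumption|].
  intros g' [Hg' Hg'a]. symmetry. exact (Huniq g' Hg' Hg'a).
Qed.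

Lemma swap_basis_iff (w zero infty x mx : X) (alpha a b : X -> X) :
  U w alpha -> alpha zero = x -> alpha mx = zero ->
  U zero a -> U zero b ->
  (rmul (rmul a alpha) b zero = infty /\ rmul (rmul a alpha) b infty = zero
   <-> a infty = mx /\ b x = infty).
Proof.
  intros Halpha Halpha0 Hmx Ha Hb. unfold rmul.
  rewrite (root_fix _ _ Ha), Halpha0.
  split; intros [Hx Hinf]; split; try assumption.
  - apply (root_injective _ _ Halpha). rewrite Hmx.
    apply (root_injective _ _ Hb). rewrite Hinf.
    symmetry. exact (root_fix _ _ Hb).
  - rewrite Hx, Hmx. exact (root_fix _ _ Hb).
Qed.

End RootGroups.

Theorem mainTheorem3 (X : Type) (eqv : X -> X -> Prop)
  (U : X -> (X -> X) -> Prop) (HM : is_local_moufang eqv U)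
  (zero infty : X) (Hbasis : ~ eqv zero infty)
  (x : X) (Hx0 : ~ eqv x zero) (Hxinf : ~ eqv x infty)
  (alpha : X -> X) (Halpha : U infty alpha) (Halpha0 : alpha zero = x)
  (mx : X) (Hmx : alpha mx = zero) :
  (exists mu : X -> X,
     ((exists a b, U zero a /\ U zero b /\ mu = rmul (rmul a alpha) b) /\
      mu zero = infty /\ mu infty = zero) /\
     (forall mu' : X -> X,
        (exists a b, U zero a /\ U zero b /\ mu' = rmul (rmul a alpha) b) ->
        mu' zero = infty -> mu' infty = zero -> mu' = mu) /\
     (exists! g, U zero g /\ g infty = mx) /\
     (exists! h, U zero h /\ h x = infty) /\
     (forall g h, U zero g -> g infty = mx -> U zero h -> h x = infty ->
        mu = rmul (rmul g alpha) h /\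
        nontrivial_on_classes eqv g /\ nontrivial_on_classes eqv h)).
Proof.
  assert (Hinf0 : ~ eqv infty zero)
    by (intro E; apply Hbasis, (lms_eqv_sym HM _ _), E).
  assert (Hmx0 : ~ eqv mx zero).
  { apply (root_reflects_not_eqv HM _ _ _ _ Halpha).
    rewrite Hmx, Halpha0. intro E. apply Hx0, (lms_eqv_sym HM _ _), E. }
  assert (Hmxinf : ~ eqv mx infty).
  { apply (root_reflects_not_eqv HM _ _ _ _ Halpha).
    rewrite Hmx, (root_fix HM _ _ Halpha). exact Hbasis. }
  pose proof (root_unique_transport HM _ _ _ Hinf0 Hmx0) as Hg0.
  pose proof (root_unique_transport HM _ _ _ Hx0 Hinf0) as Hh0.
  destruct Hg0 as [g0 [[Hg0 Hg0inf] Hg0uniq]], Hh0 as [h0 [[Hh0 Hh0x] Hh0uniq]].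
  pose proof (fun a b =>
    swap_basis_iff HM infty zero infty x mx alpha a b Halpha Halpha0 Hmx)
    as Hswap.
  exists (rmul (rmul g0 alpha) h0).
  split; [|split; [|split; [|split]]].
  - split; [exists g0, h0; auto|].
    apply (Hswap _ _ Hg0 Hh0). auto.
  - intros mu' [a [b [Ha [Hb ->]]]] E0 Einf.
    destruct (proj1 (Hswap _ _ Ha Hb) (conj E0 Einf)) as [Hainf Hbx].
    rewrite <- (Hg0uniq a (conj Ha Hainf)), <- (Hh0uniq b (conj Hb Hbx)).
    reflexivity.
  - exists g0. split; [split; assumption|exact Hg0uniq].
  - exists h0. split; [split; assumption|exact Hh0uniq].
  - intros g h Hg Hginf Hh Hhx.
    rewrite <- (Hg0uniq g (conj Hg Hginf)), <- (Hh0uniq h (conj Hh Hhx)).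
    split; [reflexivity|split].
    + exists infty. rewrite Hg0inf. exact Hmxinf.
    + exists x. rewrite Hh0x. intro E. apply Hxinf, (lms_eqv_sym HM _ _), E.
Qed.
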